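(* Let $T$ be a tree of order $n(T)\geq 3$ with $l(T)$ leaves, and suppose $(T,S)\in\mathscr{T}_1$ for some labeling $S=(S_A,S_B,S_C,S_D)$. Then $\gamma^{d}_2(T)=|S_A|=\frac{n(T)-l(T)+3}{4}$, and $S_A$ is the unique $\gamma^{d}_2$-set of $T$.
   Context: Graphs are finite and simple. For a vertex $v$ of a graph $G$, $N(v)$ is its open neighborhood, $N[v]=N(v)\cup\{v\}$, $d(v)=|N(v)|$, and $d(u,v)$ denotes distance. A leaf is a vertex of degree $1$; a support vertex is a vertex adjacent to a leaf. For a tree $T$, $l(T)$ and $s(T)$ denote the numbers of leaves and of support vertices, and $n(T)$ its order. A set $D\subseteq V(G)$ is a disjunctive dominating set ($2DD$-set) of $G$ if every vertex $v\notin D$ either has a neighbor in $D$ or has at least two vertices of $D$ at distance exactly $2$ from it. The disjunctive domination number $\gamma^{d}_2(G)$ is the minimum size of a $2DD$-set; a $2DD$-set of that size is a $\gamma^d_2$-set. Labeled trees: a labeling of a tree $T$ is a partition $S=(S_A,S_B,S_C,S_D)$ of $V(T)$ into four (possibly empty) sets; the status $\mathrm{sta}(v)\in\{A,B,C,D\}$ is the letter $x$ with $v\in S_x$. Operation $\mathscr{O}_1$: choose a vertex $v$ with $\mathrm{sta}(v)=A$; add a new vertex $u$ and the edge $uv$, with $\mathrm{sta}(u)=C$. Operation $\mathscr{O}_3$: choose a vertex $v$ with $\mathrm{sta}(v)=C$ and $d(v)=1$; add a new path $u_1u_2u_3u_4$ and the edge $u_1v$, with $\mathrm{sta}(u_1)=D$,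 $\mathrm{sta}(u_2)=B$, $\mathrm{sta}(u_3)=A$, $\mathrm{sta}(u_4)=C$. (Existing vertices keep their statuses.) $\mathscr{T}_1$ is the smallest family of labeled trees that contains $(P_3,S')$, where $S'$ gives both leaves of $P_3$ status $C$ and the central vertex status $A$, and is closed under $\mathscr{O}_1$ and $\mathscr{O}_3$. *)

From HB Require Import structures.
From mathcomp Require Import all_boot.
Set Implicit Arguments. Unset Strict Implicit. Unset Printing Implicit Defensive.

Inductive status := stA | stB | stC | stD.

Definition status_eqb (x y : status) : bool :=
  match x, y with
  | stA, stA | stB, stB | stC, stC | stD, stD => true
  | _, _ => false end.

Lemma status_eqP : Equality.axiom status_eqb.
Proof. by case; case; constructor. Qed.

HB.instance Definition _ := hasDecEq.Build status status_eqP.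

Section Graphs.
Variables (V : finType) (e : rel V).

Definition simple_graph : Prop := symmetric e /\ irreflexive e.

Definition dist2 (u v : V) : bool :=
  [&& u != v, ~~ e u v & [exists w, e u w && e w v]].

Definition is2DD (D : {set V}) : bool :=
  [forall v, (v \notin D) ==>
     ([exists w in D, e v w] || (1 < #|[set w in D | dist2 v w]|))].

(* Disjunctive domination number (setT is always a 2DD-set). *)
Definition gamma2d : nat :=
  #|[arg min_(D < [set: V] | is2DD D) #|D|]|.

Definition is_gamma2d_set (D : {set V}) : bool := is2DD D && (#|D| == gamma2d).

Definition nleaves : nat := #|[set v | #|[set w | e v w]| == 1]|.

(* Construction of the family T_1, realised inside the fixed graph (V,e)
   with labeling lab: built X means that the subtree induced on X,
   labeled by lab, is obtained from the labeled P_3 by operations O1, O3. *)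
Variable lab : V -> status.

Inductive built : {set V} -> Prop :=
| built_base (a b c : V) :
    a != b -> b != c -> a != c ->
    e a b -> e b c -> ~~ e a c ->
    lab a = stC -> lab b = stA -> lab c = stC ->
    built [set a; b; c]
| built_O1 (X : {set V}) (v u : V) :
    built X -> v \in X -> lab v = stA ->
    u \notin X -> e u v -> (forall w, w \in X -> e u w -> w = v) ->
    lab u = stC ->
    built (u |: X)
| built_O3 (X : {set V}) (v u1 u2 u3 u4 : V) :
    built X -> v \in X -> lab v = stC ->
    #|[set w in X | e v w]| = 1 ->
    u1 \notin X -> u2 \notin X -> u3 \notin X -> u4 \notin X ->
    uniq [:: u1; u2; u3; u4] ->
    e u1 v -> e u1 u2 -> e u2 u3 -> e u3 u4 ->
    (forall w, w \in X -> e u1 w -> w = v) ->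
    (forall w, w \in X -> ~~ e u2 w) ->
    (forall w, w \in X -> ~~ e u3 w) ->
    (forall w, w \in X -> ~~ e u4 w) ->
    ~~ e u1 u3 -> ~~ e u1 u4 -> ~~ e u2 u4 ->
    lab u1 = stD -> lab u2 = stB -> lab u3 = stA -> lab u4 = stC ->
    built (u1 |: (u2 |: (u3 |: (u4 |: X)))).

Definition in_T1 : Prop := built [set: V].

Definition S_of (x : status) : {set V} := [set v | lab v == x].

End Graphs.

From mathcomp Require Import all_boot zify.
Set Implicit Arguments. Unset Strict Implicit. Unset Printing Implicit Defensive.

(* Every labelled tree of T_1 satisfies an
   invariant preserved by O_1 and O_3: S_A is the unique minimum disjunctive dominating
   set, 4 |S_A| + l(T) = n(T) + 3, and the statuses behave locally (edges join statuses
   adjacent on the cycle A C D B, every C vertex has exactly one A neighbour, every A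
   vertex has a C neighbour and is not a leaf).  Both operations glue the new vertices
   to the old tree X at a single vertex v, so a disjunctive dominating set D of the new
   tree gives the disjunctive dominating set v |: (D :&: X) of X, or D :&: X itself when D
   has no vertex near v; comparing with the minimum of X bounds |D| from below, with
   equality only for the new S_A. *)

Section T1Family.
Variables (V : finType) (e : rel V).
Hypotheses (e_sym : symmetric e) (e_irr : irreflexive e).
Implicit Types (X D : {set V}) (x y : V).

Definition dist2_in X x y : Prop :=
  [/\ x != y, ~~ e x y & exists2 m, m \in X & e x m && e m y].

Definition dominated_in X D x : Prop :=
  (exists2 w, w \in D & e x w) \/
  exists y1 y2, [/\ y1 \in D, y2 \in D, y1 != y2, dist2_in X x y1 & dist2_in X x y2].

Definition dominating_in X D : Prop :=
  D \subset X /\ forall x, x \in X -> x \notin D -> dominated_in X D x.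

Definition deg_in X x := #|[set y in X | e x y]|.

Definition leaves_in X := [set x in X | deg_in X x == 1].

Lemma dist2_in_mono X X' x y : X \subset X' -> dist2_in X x y -> dist2_in X' x y.
Proof.
by move=> sXX' [xy nxy [m mX xmy]]; split=> //; exists m => //; apply: (subsetP sXX').
Qed.

Lemma dominated_in_mono X X' D D' x :
  X \subset X' -> D \subset D' -> dominated_in X D x -> dominated_in X' D' x.
Proof.
move=> sXX' sDD' [[w wD xw] | [y1 [y2 [y1D y2D y12 xy1 xy2]]]].
  by left; exists w => //; apply: (subsetP sDD').
right; exists y1, y2; split; do ?exact: (subsetP sDD'); do ?exact: dist2_in_mono xy1.
- exact: y12.
- exact: dist2_in_mono xy2.
Qed.

Lemma dominating_in_gt0 X D x : dominating_in X D -> x \in X -> 0 < #|D|.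
Proof.
move=> [_ domD] xX; rewrite card_gt0; apply/set0Pn.
have [xD | xD] := boolP (x \in D); first by exists x.
by case: (domD x xX xD) => [[w wD _] | [y1 [y2 [y1D _ _ _ _]]]]; [exists w | exists y1].
Qed.

Lemma dominating_in_set1 X x z : dominating_in X [set x] -> z \in X -> z != x -> e z x.
Proof.
move=> [_ domx] zX zx; case: (domx z zX); first by rewrite in_set1.
  by move=> [w]; rewrite in_set1 => /eqP ->.
by move=> [y1 [y2 []]]; rewrite !in_set1 => /eqP -> /eqP ->; rewrite eqxx.
Qed.

Lemma deg_in_mono x X X' : X \subset X' -> deg_in X x <= deg_in X' x.
Proof.
move=> sXX'; apply: subset_leq_card; apply/subsetP=> y; rewrite !inE.
by case/andP=> /(subsetP sXX') -> ->.
Qed.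

Lemma deg_in_eq1 X x a :
  a \in X -> e x a -> (forall y, y \in X -> e x y -> y = a) -> deg_in X x = 1.
Proof.
move=> aX xa nbr; rewrite /deg_in -(cards1 a); apply: eq_card => y.
by rewrite !inE; apply/andP/eqP => [[yX xy] | ->]; [exact: nbr | ].
Qed.

Lemma deg_in_eq2 X x a b : a != b -> a \in X -> b \in X -> e x a -> e x b ->
  (forall y, y \in X -> e x y -> y = a \/ y = b) -> deg_in X x = 2.
Proof.
move=> ab aX bX xa xb nbr; have := cards2 a b; rewrite ab => <-.
apply: eq_card => y; rewrite !inE; apply/andP/orP => [[yX xy] | [] /eqP ->] //.
by case: (nbr y yX xy) => ->; rewrite eqxx; [left | right].
Qed.

Section Attach.
Variables (X N : {set V}) (v : V).
Hypothesis attach : forall x y, x \in X -> y \in N -> e x y -> x = v.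

Lemma dist2_in_attach x y :
  x \in X -> y \in X -> dist2_in (X :|: N) x y -> dist2_in X x y.
Proof.
move=> xX yX [xy nxy [m]]; rewrite inE => /orP [mX | mN] /andP [xm my].
  by split=> //; exists m => //; rewrite xm.
by move: xy; rewrite (attach xX mN xm) (attach yX mN _) ?eqxx // e_sym.
Qed.

Lemma deg_in_attach x : x \in X -> x != v -> deg_in (X :|: N) x = deg_in X x.
Proof.
move=> xX xv; apply: eq_card => y; rewrite !inE.
have [yN | yN] := boolP (y \in N); last by rewrite orbF.
rewrite orbT /=; apply/idP/andP => [xy | [_ ->] //].
by move: xv; rewrite (attach xX yN xy) eqxx.
Qed.

Lemma dominating_in_attach D :
  v \in X -> dominating_in (X :|: N) D -> dominating_in X (v |: (D :&: X)).
Proof.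
move=> vX [sD domD]; split=> [|x xX]; first by rewrite subUset sub1set vX subsetIr.
rewrite !inE xX andbT negb_or => /andP [xv xD].
have inZ y : y \in D -> y \in X -> y \in v |: (D :&: X) by rewrite !inE => -> ->; rewrite orbT.
have [[w wD xw] | [y1 [y2 [y1D y2D y12 xy1 xy2]]]] := domD x (subsetP (subsetUl X N) x xX) xD.
  have [wX | wX] := boolP (w \in X); first by left; exists w; rewrite ?inZ.
  have wN : w \in N by move: (subsetP sD w wD); rewrite inE (negbTE wX).
  by move: xv; rewrite (attach xX wN xw) eqxx.
have via_v y : y \in D -> dist2_in (X :|: N) x y -> y \notin X -> e x v.
  move=> yD [_ _ [m]]; rewrite inE => /orP [mX | mN] /andP [xm my] yX.
    have yN : y \in N by move: (subsetP sD y yD); rewrite inE (negbTE yX).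
    by rewrite -(attach mX yN my).
  by move: xv; rewrite (attach xX mN xm) eqxx.
have vZ : v \in v |: (D :&: X) by rewrite setU11.
have [y1X | y1X] := boolP (y1 \in X); last by left; exists v; rewrite // (via_v y1).
have [y2X | y2X] := boolP (y2 \in X); last by left; exists v; rewrite // (via_v y2).
by right; exists y1, y2; split; rewrite ?inZ //; apply: dist2_in_attach.
Qed.

Lemma dominating_in_attach_far D : dominating_in (X :|: N) D ->
  (forall y, y \in D -> y \in N -> ~~ e v y /\ forall m, m \in N -> e v m -> ~~ e m y) ->
  dominating_in X (D :&: X).
Proof.
move=> [sD domD] far; split=> [|x xX]; first exact: subsetIr.
rewrite inE xX andbT => xD.
have outN y : y \in D -> y \notin X -> y \in N.
  by move=> yD yX; move: (subsetP sD y yD); rewrite inE (negbTE yX).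
have [[w wD xw] | [y1 [y2 [y1D y2D y12 xy1 xy2]]]] := domD x (subsetP (subsetUl X N) x xX) xD.
  have [wX | wX] := boolP (w \in X); first by left; exists w; rewrite // inE wD.
  have wN := outN w wD wX; have [nvw _] := far w wD wN.
  by move: nvw; rewrite -(attach xX wN xw) xw.
have inX y : y \in D -> dist2_in (X :|: N) x y -> y \in X.
  move=> yD [_ _ [m mXN /andP [xm my]]]; apply/negPn/negP => yX.
  have yN := outN y yD yX; have [nvy nvmy] := far y yD yN.
  move: mXN; rewrite inE => /orP [mX | mN].
    by move: nvy; rewrite -(attach mX yN my) my.
  by move: (nvmy m mN); rewrite -(attach xX mN xm) => /(_ xm); rewrite my.
have y1X := inX y1 y1D xy1; have y2X := inX y2 y2D xy2.
by right; exists y1, y2; split; rewrite ?inE ?y1D ?y2D //; apply: dist2_in_attach.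
Qed.

End Attach.

Lemma dominating_in_setT D : dominating_in [set: V] D <-> is2DD e D.
Proof.
have dist2T x y : dist2_in [set: V] x y <-> dist2 e x y.
  split=> [[xy nxy [m _ xmy]] | /and3P [xy nxy /existsP [m xmy]]].
    by rewrite /dist2 xy nxy; apply/existsP; exists m.
  by split=> //; exists m.
split=> [[_ domD] | DD].
  apply/forallP=> x; apply/implyP=> xD.
  case: (domD x (in_setT x) xD) => [[w wD xw] | [y1 [y2 [y1D y2D y12 xy1 xy2]]]].
    by apply/orP; left; apply/existsP; exists w; rewrite wD.
  apply/orP; right; apply/card_gt1P; exists y1, y2.
  by rewrite !inE y1D y2D y12; split=> //; apply/dist2T.
split=> [|x _ xD]; first exact: subsetT.
move/forallP/(_ x)/implyP/(_ xD): DD => /orP [/existsP [w /andP [wD xw]] | ].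
  by left; exists w.
move=> /card_gt1P [y1 [y2 []]]; rewrite !inE => /andP [y1D xy1] /andP [y2D xy2] y12.
by right; exists y1, y2; split=> //; apply/dist2T.
Qed.

Lemma card_leaves_in_setT : #|leaves_in [set: V]| = nleaves e.
Proof.
apply: eq_card => x; rewrite !inE /deg_in; congr (_ == 1).
by apply: eq_card => y; rewrite !inE.
Qed.

Variable lab : V -> status.

(* Adjacency on the cycle A - C - D - B - A. *)
Definition status_adj (s t : status) : bool :=
  match s, t with
  | stA, stB | stA, stC | stB, stA | stB, stD
  | stC, stA | stC, stD | stD, stB | stD, stC => true
  | _, _ => false
  end.

Definition A_set X := [set x in X | lab x == stA].

Record labelled_tree X : Prop := {
  status_adj_edge : forall x y, x \in X -> y \in X -> e x y -> status_adj (lab x) (lab y);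
  C_has_A_nbr : forall c, c \in X -> lab c = stC ->
    exists2 a, a \in X & e c a && (lab a == stA);
  C_A_nbr_uniq : forall c a1 a2, c \in X -> a1 \in X -> a2 \in X -> lab c = stC ->
    lab a1 = stA -> lab a2 = stA -> e c a1 -> e c a2 -> a1 = a2;
  A_has_C_nbr : forall a, a \in X -> lab a = stA ->
    exists2 c, c \in X & e a c && (lab c == stC);
  A_not_leaf : forall a, a \in X -> lab a = stA -> 1 < deg_in X a }.

Definition unique_min_dominating X D0 : Prop :=
  dominating_in X D0 /\ forall D, dominating_in X D -> D != D0 -> #|D0| < #|D|.

Record T1_inv X : Prop := {
  T1_labelled : labelled_tree X;
  T1_count : 4 * #|A_set X| + #|leaves_in X| = #|X| + 3;
  T1_min : unique_min_dominating X (A_set X) }.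

Lemma in_A_set X x : (x \in A_set X) = (x \in X) && (lab x == stA).
Proof. by rewrite inE. Qed.

Lemma labelled_no_C_A_path X c m a : labelled_tree X -> c \in X -> m \in X -> a \in X ->
  lab c = stC -> lab a = stA -> e c m -> e m a -> False.
Proof.
move=> LX cX mX aX lc la cm ma.
have := status_adj_edge LX cX mX cm; have := status_adj_edge LX mX aX ma.
by rewrite lc la; case: (lab m).
Qed.

Section Base.
Variables a b c : V.
Hypotheses (ab : a != b) (bc : b != c) (ac : a != c).
Hypotheses (Eab : e a b) (Ebc : e b c) (Nac : ~~ e a c).
Hypotheses (la : lab a = stC) (lb : lab b = stA) (lc : lab c = stC).

Local Notation P := [set a; b; c].

Let P_edge := (e_irr a, e_irr b, e_irr c, Eab, Ebc, e_sym b a, e_sym c b,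
  negbTE Nac, e_sym c a, la, lb, lc).

Lemma mem_base x : x \in P -> [\/ x = a, x = b | x = c].
Proof. by rewrite !inE => /orP [/orP [] | ] /eqP ->; [apply: Or31 | apply: Or32 | apply: Or33]. Qed.

Lemma base_nbr x y : x \in P -> y \in P -> e x y -> x = b \/ y = b.
Proof. by move=> /mem_base [] -> /mem_base [] ->; rewrite ?P_edge //; auto. Qed.

Lemma base_A_set : A_set P = [set b].
Proof.
apply/setP=> y; rewrite in_A_set in_set1.
apply/andP/eqP => [[/mem_base [] -> /eqP] | ->]; rewrite ?P_edge //.
by rewrite !inE eqxx orbT.
Qed.

Lemma base_deg_b : deg_in P b = 2.
Proof.
apply: (deg_in_eq2 (a := a) (b := c)); rewrite ?inE ?eqxx ?orbT ?P_edge //.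
by move=> y /mem_base [] ->; rewrite ?P_edge; auto.
Qed.

Lemma base_leaves : leaves_in P = [set a; c].
Proof.
have deg1 x : x \in P -> x != b -> deg_in P x = 1.
  move=> xP xb; apply: (deg_in_eq1 (a := b)); rewrite ?inE ?eqxx ?orbT //.
    by case/mem_base: xP xb => ->; rewrite ?eqxx ?P_edge.
  by move=> y yP /(base_nbr xP yP) [/eqP | //]; rewrite (negbTE xb).
apply/setP=> y; rewrite inE; apply/andP/idP => [[/mem_base [] -> ] | ].
- by rewrite !inE eqxx.
- by rewrite base_deg_b.
- by rewrite !inE eqxx orbT.
by rewrite !inE => /orP [] /eqP ->; rewrite deg1 ?inE ?eqxx ?orbT // eq_sym.
Qed.

Lemma base_labelled : labelled_tree P.
Proof.
have bP : b \in P by rewrite !inE eqxx orbT.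
split.
- by move=> x y /mem_base [] -> /mem_base [] ->; rewrite ?P_edge.
- by move=> x /mem_base [] -> lx; rewrite ?P_edge in lx *; exists b; rewrite ?P_edge.
- move=> x a1 a2 _ a1P a2P _ la1 la2 _ _.
  have: a1 \in A_set P by rewrite in_A_set a1P la1.
  have: a2 \in A_set P by rewrite in_A_set a2P la2.
  by rewrite base_A_set !in_set1 => /eqP -> /eqP ->.
- move=> x /mem_base [] -> lx; rewrite ?P_edge // in lx.
  by exists a; rewrite ?inE ?eqxx ?P_edge.
- by move=> x /mem_base [] -> lx; rewrite ?P_edge // in lx *; rewrite base_deg_b.
Qed.

Lemma base_min : unique_min_dominating P [set b].
Proof.
have aP : a \in P by rewrite !inE eqxx.
have cP : c \in P by rewrite !inE eqxx orbT.
split.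
  split=> [|x /mem_base [] -> xb]; first by rewrite sub1set !inE eqxx orbT.
  - by left; exists b; rewrite ?inE.
  - by rewrite inE eqxx in xb.
  - by left; exists b; rewrite ?inE ?P_edge.
move=> D domD Db; rewrite cards1 ltn_neqAle (dominating_in_gt0 domD aP) andbT.
apply/negP; rewrite eq_sym => /cards1P [x Dx]; rewrite Dx in domD Db.
have xP : x \in P by case: domD => /subsetP/(_ x); rewrite in_set1 eqxx => /(_ isT).
case/mem_base: xP domD Db => -> domD; rewrite ?eqxx //.
- by move: (dominating_in_set1 domD cP); rewrite (eq_sym c) ac e_sym (negbTE Nac) => /(_ isT).
- by move: (dominating_in_set1 domD aP); rewrite ac P_edge => /(_ isT).
Qed.

Lemma T1_inv_base : T1_inv P.
Proof.
split; [exact: base_labelled | | by rewrite base_A_set; apply: base_min].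
rewrite base_A_set base_leaves cards1 cards2 ac.
have ->: P = a |: [set b; c] by apply/setP=> y; rewrite !inE orbA.
by rewrite cardsU1 cards2 bc !inE (negbTE ab) (negbTE ac).
Qed.

End Base.

Section PendantC.
Variables (X : {set V}) (v u : V).
Hypotheses (IH : T1_inv X) (vX : v \in X) (lv : lab v = stA) (uX : u \notin X).
Hypotheses (uv : e u v) (u_nbr : forall w, w \in X -> e u w -> w = v) (lu : lab u = stC).

Local Notation X' := (X :|: [set u]).

Let mem_X' y : y \in X' -> y \in X \/ y = u.
Proof. by rewrite inE in_set1 => /orP [yX | /eqP ->]; [left | right]. Qed.

Let X_sub : X \subset X'. Proof. exact: subsetUl. Qed.

Lemma O1_attach x y : x \in X -> y \in [set u] -> e x y -> x = v.
Proof. by move=> xX; rewrite in_set1 => /eqP ->; rewrite e_sym; apply: u_nbr. Qed.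

Lemma O1_A_set : A_set X' = A_set X.
Proof.
apply/setP=> y; rewrite !in_A_set inE in_set1.
by have [-> | _] := eqVneq y u; rewrite ?orbF // (negbTE uX) lu.
Qed.

Lemma O1_labelled : labelled_tree X'.
Proof.
have LX := T1_labelled IH.
have u_nbr' y : y \in X' -> e u y -> y = v.
  by case/mem_X' => [yX | ->]; [apply: u_nbr | rewrite e_irr].
split.
- move=> x y /mem_X' [xX | ->] /mem_X' [yX | ->] xy.
  + exact: (status_adj_edge LX).
  + by rewrite (O1_attach xX (set11 u) xy) lu lv.
  + by rewrite (u_nbr yX xy) lu lv.
  + by rewrite e_irr in xy.
- move=> x /mem_X' [xX | ->] lx.
  + by have [a aX xa] := C_has_A_nbr LX xX lx; exists a => //; apply: (subsetP X_sub).
  + by exists v; rewrite ?uv ?lv // inE vX.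
- move=> x a1 a2 /mem_X' [xX | ->] a1X a2X lx la1 la2 xa1 xa2; last first.
    by rewrite (u_nbr' a1 a1X xa1) (u_nbr' a2 a2X xa2).
  case/mem_X': a1X la1 xa1 => [a1X | ->]; last by rewrite lu.
  case/mem_X': a2X la2 xa2 => [a2X | ->]; last by rewrite lu.
  by move=> la2 xa2 la1 xa1; apply: (C_A_nbr_uniq LX) xa1 xa2.
- move=> x /mem_X' [xX | ->] lx; last by rewrite lu in lx.
  by have [c cX xc] := A_has_C_nbr LX xX lx; exists c => //; apply: (subsetP X_sub).
- move=> x /mem_X' [xX | ->] lx; last by rewrite lu in lx.
  exact: leq_trans (A_not_leaf LX xX lx) (deg_in_mono x X_sub).
Qed.

Lemma O1_leaves : leaves_in X' = u |: leaves_in X.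
Proof.
have LX := T1_labelled IH.
have deg_u : deg_in X' u = 1.
  apply: (deg_in_eq1 (a := v)); rewrite ?inE ?vX //.
  by move=> y /mem_X' [yX | ->]; [apply: u_nbr | rewrite e_irr].
apply/setP=> y; rewrite !inE.
have [-> | yu] := eqVneq y u; first by rewrite orbT deg_u.
rewrite orbF.
have [yX | //] := boolP (y \in X).
have [-> | yv] := eqVneq y v.
  have degX := A_not_leaf LX vX lv.
  have degX' := leq_trans degX (deg_in_mono v X_sub).
  by rewrite !gtn_eqF.
by rewrite (deg_in_attach O1_attach).
Qed.

Lemma O1_count : 4 * #|A_set X'| + #|leaves_in X'| = #|X'| + 3.
Proof.
rewrite O1_A_set O1_leaves [X :|: _]setUC !cardsU1 !inE (negbTE uX) /=.
by have := T1_count IH; lia.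
Qed.

Lemma O1_dominating : dominating_in X' (A_set X).
Proof.
have [[sA domA] _] := T1_min IH.
split=> [|x /mem_X' [xX | ->] xA]; first exact: subset_trans sA X_sub.
  exact: dominated_in_mono X_sub (subxx _) (domA x xX xA).
by left; exists v; rewrite // in_A_set vX lv.
Qed.

(* Otherwise the C neighbour of v could not be dominated: its only possible A neighbour
   is v, and no A vertex is at distance 2 from a C vertex. *)
Lemma O1_v_in D : dominating_in X' D -> u \in D -> D :&: X \subset A_set X -> v \in D.
Proof.
move=> [sD domD] uD sDA; have LX' := O1_labelled.
have [c cX /andP [vc /eqP lc]] := A_has_C_nbr (T1_labelled IH) vX lv.
have cu : c != u by apply: contraNneq uX => <-.
have inA y : y \in D -> y != u -> y \in X /\ lab y = stA.
  move=> yD yu.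
  have yX : y \in X by case/mem_X': (subsetP sD y yD) yu => // ->; rewrite eqxx.
  by have := subsetP sDA y; rewrite inE yD yX in_A_set => /(_ isT) /andP [_ /eqP].
have cD : c \notin D by apply/negP=> /inA /(_ cu) [_]; rewrite lc.
have cX' : c \in X' by apply: (subsetP X_sub).
case: (domD c cX' cD) => [[w wD cw] | [y1 [y2 [y1D y2D y12 cy1 cy2]]]].
  have wu : w != u.
    apply/eqP=> wu; move: cw; rewrite wu e_sym => /(u_nbr cX) cv.
    by move: lc; rewrite cv lv.
  have [wX lw] := inA w wD wu.
  by rewrite (C_A_nbr_uniq (T1_labelled IH) cX vX wX lc lv lw _ cw) // e_sym.
have [y [yD yu cy]] : exists y, [/\ y \in D, y != u & dist2_in X' c y].
  have [y1u | y1u] := eqVneq y1 u; last by exists y1.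
  by exists y2; split=> //; rewrite -y1u eq_sym.
have [yX ly] := inA y yD yu.
case: cy => _ _ [m mX' /andP [cm my]].
by case: (labelled_no_C_A_path LX' cX' mX' (subsetP X_sub y yX) lc ly cm my).
Qed.

Lemma O1_min D : dominating_in X' D -> D != A_set X -> #|A_set X| < #|D|.
Proof.
move=> domD DA; have [_ minX] := T1_min IH; have sD := domD.1.
have inX y : y \in D -> y != u -> y \in X.
  by move=> yD; case/mem_X': (subsetP sD y yD) => // ->; rewrite eqxx.
have [uD | uD] := boolP (u \in D); last first.
  have DX : D :&: X = D.
    apply/setIidPl/subsetP=> y yD; apply: (inX y yD); by apply: contraNneq uD => <-.
  apply: minX DA; rewrite -DX; apply: (dominating_in_attach_far O1_attach domD).
  by move=> y yD; rewrite in_set1 => /eqP yu; move: uD; rewrite -yu yD.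
have cardD : #|D| = #|D :&: X| + 1.
  rewrite (cardsD1 u D) uD addnC; congr (_ + _); apply: eq_card => y; rewrite !inE.
  by have [-> | yu] := eqVneq y u; rewrite ?(negbTE uX) ?andbF //= andb_idr // => /inX; apply.
have domZ := dominating_in_attach O1_attach vX domD.
have [ZA | ZA] := eqVneq (v |: (D :&: X)) (A_set X).
  have vD : v \in D by apply: O1_v_in domD uD _; rewrite -ZA subsetUr.
  have -> : A_set X = D :&: X by rewrite -ZA; apply/setUidPr; rewrite sub1set inE vD vX.
  by rewrite cardD addn1.
apply: leq_trans (minX _ domZ ZA) _.
by rewrite cardD cardsU1 addnC leq_add2l leq_b1.
Qed.

Lemma T1_inv_O1 : T1_inv (u |: X).
Proof.
rewrite setUC; split; [exact: O1_labelled | exact: O1_count | ].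
by rewrite O1_A_set; split; [exact: O1_dominating | exact: O1_min].
Qed.

End PendantC.

Section PendantPath.
Variables (X : {set V}) (v u1 u2 u3 u4 : V).
Hypotheses (IH : T1_inv X) (vX : v \in X) (lv : lab v = stC) (v_leaf : deg_in X v = 1).
Hypotheses (u1X : u1 \notin X) (u2X : u2 \notin X) (u3X : u3 \notin X) (u4X : u4 \notin X).
Hypothesis u_uniq : uniq [:: u1; u2; u3; u4].
Hypotheses (u1v : e u1 v) (u12 : e u1 u2) (u23 : e u2 u3) (u34 : e u3 u4).
Hypotheses (u1_nbr : forall w, w \in X -> e u1 w -> w = v)
  (u2_nX : forall w, w \in X -> ~~ e u2 w) (u3_nX : forall w, w \in X -> ~~ e u3 w)
  (u4_nX : forall w, w \in X -> ~~ e u4 w).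
Hypotheses (nu13 : ~~ e u1 u3) (nu14 : ~~ e u1 u4) (nu24 : ~~ e u2 u4).
Hypotheses (l1 : lab u1 = stD) (l2 : lab u2 = stB) (l3 : lab u3 = stA) (l4 : lab u4 = stC).

Let ne13 : u1 != u3. Proof. by case/and4P: u_uniq; rewrite !inE !negb_or => /and3P []. Qed.
Let ne14 : u1 != u4. Proof. by case/and4P: u_uniq; rewrite !inE !negb_or => /and3P []. Qed.
Let ne24 : u2 != u4. Proof. by case/and4P: u_uniq => _; rewrite !inE !negb_or => /andP []. Qed.

Local Notation N := [set u1; u2; u3; u4].
Local Notation X' := (X :|: N).

Let path_edge := (e_irr u1, e_irr u2, e_irr u3, e_irr u4, u12, u23, u34,
  e_sym u2 u1, e_sym u3 u2, e_sym u4 u3, negbTE nu13, negbTE nu14, negbTE nu24,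
  e_sym u3 u1, e_sym u4 u1, e_sym u4 u2).

Let mem_N y : y \in N -> [\/ y = u1, y = u2, y = u3 | y = u4].
Proof.
rewrite !inE -!orbA => /or4P [] /eqP ->; by [apply: Or41 | apply: Or42 | apply: Or43 | apply: Or44].
Qed.

Let mem_X' y : y \in X' -> y \in X \/ [\/ y = u1, y = u2, y = u3 | y = u4].
Proof. by rewrite inE => /orP [yX | /mem_N]; [left | right]. Qed.

Let X_sub : X \subset X'. Proof. exact: subsetUl. Qed.
Let inX' y : y \in X -> y \in X'. Proof. exact: (subsetP X_sub). Qed.
Let u1X' : u1 \in X'. Proof. by rewrite !inE eqxx orbT. Qed.
Let u2X' : u2 \in X'. Proof. by rewrite !inE eqxx !orbT. Qed.
Let u3X' : u3 \in X'. Proof. by rewrite !inE eqxx !orbT. Qed.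
Let u4X' : u4 \in X'. Proof. by rewrite !inE eqxx !orbT. Qed.

Let N_notX y : y \in N -> y \notin X.
Proof. by case/mem_N=> ->. Qed.

Lemma O3_attach x y : x \in X -> y \in N -> e x y -> x = v /\ y = u1.
Proof.
move=> xX /mem_N [] -> xy; rewrite e_sym in xy.
- by rewrite (u1_nbr xX xy).
- by move: (u2_nX xX); rewrite xy.
- by move: (u3_nX xX); rewrite xy.
- by move: (u4_nX xX); rewrite xy.
Qed.

Let attach x y : x \in X -> y \in N -> e x y -> x = v.
Proof. by move=> xX yN /(O3_attach xX yN) []. Qed.

Let nbr_X x y : x \in X -> y \in X' -> e x y -> y \in X \/ (x = v /\ y = u1).
Proof. by move=> xX; rewrite inE => /orP [yX | yN] xy; [left | right; apply: O3_attach xy]. Qed.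

Lemma nbr_u1 y : y \in X' -> e u1 y -> y = v \/ y = u2.
Proof. by case/mem_X' => [yX /(u1_nbr yX) | [] ->]; rewrite ?path_edge; auto. Qed.

Lemma nbr_u2 y : y \in X' -> e u2 y -> y = u1 \/ y = u3.
Proof. by case/mem_X' => [yX | [] ->]; rewrite ?path_edge ?(negbTE (u2_nX yX)); auto. Qed.

Lemma nbr_u3 y : y \in X' -> e u3 y -> y = u2 \/ y = u4.
Proof. by case/mem_X' => [yX | [] ->]; rewrite ?path_edge ?(negbTE (u3_nX yX)); auto. Qed.

Lemma nbr_u4 y : y \in X' -> e u4 y -> y = u3.
Proof. by case/mem_X' => [yX | [] ->]; rewrite ?path_edge ?(negbTE (u4_nX yX)). Qed.

Lemma O3_v_nbr : exists2 p, p \in X & [/\ e v p, lab p = stA & forall y, y \in X -> e v y -> y = p].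
Proof.
have [p pX /andP [vp /eqP lp]] := C_has_A_nbr (T1_labelled IH) vX lv.
exists p => //; split=> // y yX vy; move/eqP/cards1P: v_leaf => [q vq].
have : p \in [set w in X | e v w] by rewrite inE pX.
have : y \in [set w in X | e v w] by rewrite inE yX.
by rewrite vq !in_set1 => /eqP -> /eqP ->.
Qed.

Lemma O3_A_set : A_set X' = u3 |: A_set X.
Proof.
apply/setP=> y; apply/idP/idP.
  rewrite in_A_set => /andP [/mem_X' [yX | [] ->] /eqP ly]; rewrite ?l1 ?l2 ?l4 // in ly.
    by rewrite setU1r // in_A_set yX ly.
  exact: setU11.
case/setU1P => [-> | ]; first by rewrite in_A_set u3X' l3.
by rewrite !in_A_set => /andP [/inX' -> ->].
Qed.

Lemma O3_path_deg :
  [/\ deg_in X' u1 = 2, deg_in X' u2 = 2, deg_in X' u3 = 2 & deg_in X' u4 = 1].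
Proof.
split.
- apply: (deg_in_eq2 (a := v) (b := u2)); rewrite ?(inX' vX) //; last exact: nbr_u1.
  by apply: contraNneq u2X => <-.
- apply: (deg_in_eq2 (a := u1) (b := u3)); rewrite ?path_edge //; last exact: nbr_u2.
- apply: (deg_in_eq2 (a := u2) (b := u4)); rewrite ?path_edge //; last exact: nbr_u3.
- by apply: (deg_in_eq1 (a := u3)); rewrite ?path_edge //; apply: nbr_u4.
Qed.

Lemma O3_deg_v : deg_in X' v = 2.
Proof.
have [p pX [vp _ v_nbr]] := O3_v_nbr.
apply: (deg_in_eq2 (a := p) (b := u1)); rewrite ?(inX' pX) // 1?e_sym //.
  by apply: contraNneq u1X => <-.
move=> y /mem_X' [yX vy | yN vy]; first by left; apply: v_nbr.
by right; apply: (O3_attach vX _ vy).2; case: yN => ->; rewrite !inE eqxx ?orbT.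
Qed.

Lemma O3_labelled : labelled_tree X'.
Proof.
have LX := T1_labelled IH.
split.
- move=> x y /mem_X' [xX | [] ->] yX' xy.
  + case: (nbr_X xX yX' xy) => [yX | [-> ->]]; last by rewrite lv l1.
    exact: (status_adj_edge LX).
  + by case: (nbr_u1 yX' xy) => ->; rewrite l1 ?lv ?l2.
  + by case: (nbr_u2 yX' xy) => ->; rewrite l2 ?l1 ?l3.
  + by case: (nbr_u3 yX' xy) => ->; rewrite l3 ?l2 ?l4.
  + by rewrite (nbr_u4 yX' xy) l4 l3.
- move=> x /mem_X' [xX | [] ->] lx; rewrite ?l1 ?l2 ?l3 // in lx.
    by have [a aX xa] := C_has_A_nbr LX xX lx; exists a; rewrite ?inX'.
  by exists u3; rewrite ?path_edge ?l3.
- move=> x a1 a2 /mem_X' [xX | [] ->] a1X' a2X' lx la1 la2 xa1 xa2;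
    rewrite ?l1 ?l2 ?l3 // in lx; last by rewrite (nbr_u4 a1X' xa1) (nbr_u4 a2X' xa2).
  case: (nbr_X xX a1X' xa1) => [a1X | [_ a1u]]; last by rewrite a1u l1 in la1.
  case: (nbr_X xX a2X' xa2) => [a2X | [_ a2u]]; last by rewrite a2u l1 in la2.
  exact: (C_A_nbr_uniq LX) xa1 xa2.
- move=> x /mem_X' [xX | [] ->] lx; rewrite ?l1 ?l2 ?l4 // in lx.
    by have [c cX xc] := A_has_C_nbr LX xX lx; exists c; rewrite ?inX'.
  by exists u4; rewrite ?u4X' ?path_edge ?l4.
- move=> x /mem_X' [xX | [] ->] lx; rewrite ?l1 ?l2 ?l4 // in lx.
    exact: leq_trans (A_not_leaf LX xX lx) (deg_in_mono x X_sub).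
  by case: O3_path_deg => _ _ ->.
Qed.

Lemma O3_leaves : leaves_in X' = u4 |: (leaves_in X :\ v).
Proof.
have [d1 d2 d3 d4] := O3_path_deg.
apply/setP=> y; apply/idP/idP.
  rewrite inE => /andP [/mem_X' [yX | [] ->]]; rewrite ?d1 ?d2 ?d3 ?setU11 //.
  have [-> | yv] := eqVneq y v; first by rewrite O3_deg_v.
  by rewrite (deg_in_attach attach) // => dy; rewrite setU1r // !inE yv yX.
case/setU1P => [-> | /setD1P [yv]]; first by rewrite inE u4X' d4.
by rewrite !inE => /andP [yX dy]; rewrite yX (deg_in_attach attach).
Qed.

Lemma O3_count : 4 * #|A_set X'| + #|leaves_in X'| = #|X'| + 3.
Proof.
have card_N : #|N| = 4.
  rewrite -[4](card_uniqP u_uniq); apply: eq_card => y.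
  by rewrite !inE -!orbA.
have XN : X :&: N = set0.
  by apply/setP=> y; rewrite inE in_set0; apply/negbTE/andP => -[yX /N_notX]; rewrite yX.
have vL : v \in leaves_in X by rewrite inE vX v_leaf.
rewrite O3_A_set O3_leaves !cardsU1 !inE (negbTE u3X) (negbTE u4X) !andbF /=.
rewrite cardsU XN cards0 card_N.
have := T1_count IH; rewrite (cardsD1 v (leaves_in X)) vL subn0 /=.
move: #|A_set X| #|leaves_in X :\ v| #|X| => a l n; clear; lia.
Qed.

Lemma O3_dominating : dominating_in X' (u3 |: A_set X).
Proof.
have [[sA domA] _] := T1_min IH.
split=> [|x /mem_X' [xX | [] ->] xA].
- by rewrite subUset sub1set u3X' (subset_trans sA X_sub).
- apply: dominated_in_mono X_sub (subsetUr _ _) (domA x xX _).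
  by apply: contra xA; apply: setU1r.
- have [p pX [vp lp v_nbr]] := O3_v_nbr.
  have u1p : u1 != p by apply: contraNneq u1X => ->.
  right; exists u3, p; split.
  + exact: setU11.
  + by rewrite setU1r // in_A_set pX lp.
  + by apply: contraNneq u3X => ->.
  + by split; rewrite ?path_edge //; exists u2; rewrite ?path_edge.
  + split=> //; last by exists v; rewrite ?(inX' vX) ?u1v.
    by apply/negP=> /(u1_nbr pX) pv; move: lp; rewrite pv lv.
- by left; exists u3; rewrite ?setU11.
- by rewrite setU11 in xA.
- by left; exists u3; rewrite ?setU11 ?path_edge.
Qed.

Lemma O3_u3_or_u4 D : dominating_in X' D -> u3 \in D \/ u4 \in D.
Proof.
move=> [sD domD]; have [u4D | u4D] := boolP (u4 \in D); [by right | left].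
case: (domD u4 u4X' u4D) => [[w wD u4w] | [y1 [y2 [y1D y2D y12 u4y1 u4y2]]]].
  by rewrite -(nbr_u4 (subsetP sD w wD) u4w).
have to_u2 y : y \in D -> dist2_in X' u4 y -> y = u2.
  move=> yD [u4y _ [m mX' /andP [u4m my]]]; rewrite (nbr_u4 mX' u4m) in my.
  by case: (nbr_u3 (subsetP sD y yD) my) => // yu4; rewrite yu4 eqxx in u4y.
by move: y12; rewrite (to_u2 y1 y1D u4y1) (to_u2 y2 y2D u4y2) eqxx.
Qed.

Lemma O3_v_in D : dominating_in X' D -> u1 \notin D -> u2 \notin D -> u3 \notin D -> v \in D.
Proof.
move=> [sD domD] u1D u2D u3D.
case: (domD u2 u2X' u2D) => [[w wD u2w] | [y1 [y2 [y1D y2D y12 u2y1 u2y2]]]].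
  by case: (nbr_u2 (subsetP sD w wD) u2w) => wu; move: wD; rewrite wu ?(negbTE u1D) ?(negbTE u3D).
have to_v y : y \in D -> dist2_in X' u2 y -> y = v \/ y = u4.
  move=> yD [u2y _ [m mX' /andP [u2m my]]]; have yX' := subsetP sD y yD.
  case: (nbr_u2 mX' u2m) my => -> my.
    by case: (nbr_u1 yX' my) => [|yu2]; [left | rewrite yu2 eqxx in u2y].
  by case: (nbr_u3 yX' my) => [yu2 | ]; [rewrite yu2 eqxx in u2y | right].
have [y1v | y1u4] := to_v y1 y1D u2y1; first by rewrite -y1v.
have [y2v | y2u4] := to_v y2 y2D u2y2; first by rewrite -y2v.
by move: y12; rewrite y1u4 y2u4 eqxx.
Qed.

(* The boolean [v \notin D] is read as 0 or 1: without v, D needs two path vertices. *)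
Lemma O3_card_path D : dominating_in X' D ->
  ~~ [&& v \notin D, u1 \notin D, u2 \notin D & u4 \notin D] -> (v \notin D) < #|D :&: N|.
Proof.
move=> domD near.
have [u1N u2N u3N u4N] : [/\ u1 \in N, u2 \in N, u3 \in N & u4 \in N].
  by rewrite !inE !eqxx !orbT.
have [vD | vD] := boolP (v \in D).
  rewrite card_gt0; apply/set0Pn.
  by case: (O3_u3_or_u4 domD) => uD; [exists u3 | exists u4]; rewrite inE uD.
have two a b : a \in D -> b \in D -> a \in N -> b \in N -> a != b -> 1 < #|D :&: N|.
  by move=> aD bD aN bN ab; apply/card_gt1P; exists a, b; rewrite !in_setI aD bD aN bN.
have ne23 : u2 != u3 by apply: contraTneq u23 => ->; rewrite e_irr.
have ne34 : u3 != u4 by apply: contraTneq u34 => ->; rewrite e_irr.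
move: near; rewrite vD /= -!negb_or !negbK => /or3P near.
have [u3D | u3D] := boolP (u3 \in D).
  case: near => uD; [apply: (two u1 u3) | apply: (two u2 u3) | apply: (two u3 u4)] => //.
have u4D : u4 \in D by case: (O3_u3_or_u4 domD); rewrite ?(negbTE u3D).
have [u1D | u1D] := boolP (u1 \in D); first exact: (two u1 u4).
have [u2D | u2D] := boolP (u2 \in D); first exact: (two u2 u4).
by move: vD; rewrite (O3_v_in domD u1D u2D u3D).
Qed.

Lemma O3_card_split D : D \subset X' -> #|D| = #|D :&: X| + #|D :&: N|.
Proof.
move=> sD; rewrite -(cardsID X D); congr (_ + _); apply: eq_card => y.
rewrite in_setD in_setI; have [yD | _] := boolP (y \in D); rewrite ?andbF ?andbT //.
apply/idP/idP => [yX | /N_notX //].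
by move: (subsetP sD y yD); rewrite inE (negbTE yX).
Qed.

Lemma O3_trace_u3 D : dominating_in X' D ->
  [&& v \notin D, u1 \notin D, u2 \notin D & u4 \notin D] -> D :&: N = [set u3].
Proof.
move=> domD /and4P [vD u1D u2D u4D].
have u3D : u3 \in D by case: (O3_u3_or_u4 domD); rewrite // (negbTE u4D).
apply/setP=> y; rewrite in_setI in_set1; apply/andP/eqP => [[yD /mem_N] | ->].
  by case=> yu; move: yD; rewrite yu ?(negbTE u1D) ?(negbTE u2D) ?(negbTE u4D).
by rewrite u3D !inE eqxx orbT.
Qed.

Lemma O3_min D : dominating_in X' D -> D != u3 |: A_set X -> #|u3 |: A_set X| < #|D|.
Proof.
move=> domD DA; have [_ minX] := T1_min IH; have sD := domD.1.
rewrite cardsU1 in_A_set (negbTE u3X) /= add1n (O3_card_split sD).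
have [far | near] := boolP [&& v \notin D, u1 \notin D, u2 \notin D & u4 \notin D].
  have DN := O3_trace_u3 domD far.
  have domZ : dominating_in X (D :&: X).
    apply: (dominating_in_attach_far attach domD) => y yD yN.
    have -> : y = u3 by apply/set1P; rewrite -DN inE yD yN.
    split=> [|m mN vm]; first by rewrite e_sym u3_nX.
    by have [_ ->] := O3_attach vX mN vm.
  have DZ : D = u3 |: (D :&: X) by rewrite -DN -setIUr setUC (setIidPl sD).
  have ZA : D :&: X != A_set X by apply: contraNneq DA => ZA; rewrite {1}DZ ZA.
  by rewrite DN cards1 addn1 ltnS; apply: minX domZ ZA.
have domZ := dominating_in_attach attach vX domD.
have ZA : v |: (D :&: X) != A_set X.
  by apply: contraTneq (setU11 v (D :&: X)) => ->; rewrite in_A_set lv andbF.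
have := minX _ domZ ZA; have := O3_card_path domD near.
rewrite cardsU1 !inE vX andbT.
by move: (v \notin D) #|A_set X| #|D :&: X| #|D :&: N| => b a z n; clear; case: b; lia.
Qed.

Lemma T1_inv_O3 : T1_inv (u1 |: (u2 |: (u3 |: (u4 |: X)))).
Proof.
have -> : u1 |: (u2 |: (u3 |: (u4 |: X))) = X'.
  by apply/setP=> y; rewrite !inE -!orbA; case: (y \in X); rewrite ?orbT ?orbF.
split; [exact: O3_labelled | exact: O3_count | ].
by rewrite O3_A_set; split; [exact: O3_dominating | exact: O3_min].
Qed.

End PendantPath.

Lemma built_T1_inv X : built e lab X -> T1_inv X.
Proof.
elim=> {X} [a b c | X v u _ IH | X v u1 u2 u3 u4 _ IH].
- exact: T1_inv_base.
- exact: T1_inv_O1 IH.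
- exact: T1_inv_O3 IH.
Qed.

End T1Family.

Theorem lemma3p2 (V : finType) (e : rel V) (lab : V -> status) :
  simple_graph e ->
  in_T1 e lab ->
  gamma2d e = #|S_of lab stA| /\
  4 * #|S_of lab stA| = #|V| - nleaves e + 3 /\
  is_gamma2d_set e (S_of lab stA) /\
  (forall D : {set V}, is_gamma2d_set e D -> D = S_of lab stA).
Proof.
move=> [e_sym e_irr] inT1.
have [_ count [domA minA]] := built_T1_inv e_sym e_irr inT1.
have -> : S_of lab stA = A_set lab [set: V] by apply/setP=> y; rewrite !inE.
have A_le D : is2DD e D -> #|A_set lab [set: V]| <= #|D|.
  move=> /dominating_in_setT DD; have [-> // | DA] := eqVneq D (A_set lab [set: V]).
  exact: ltnW (minA D DD DA).
have gamma_A : gamma2d e = #|A_set lab [set: V]|.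
  rewrite /gamma2d; case: arg_minnP => [|D DD Dmin]; first by apply/forallP=> x; rewrite inE.
  by apply/eqP; rewrite eqn_leq A_le // andbT Dmin //; apply/dominating_in_setT.
split=> //; split.
  move: count; rewrite card_leaves_in_setT cardsT.
  have : nleaves e <= #|V| by apply: max_card.
  by move: (nleaves e) #|V| #|A_set _ _| => l n a; clear; lia.
split; first by rewrite /is_gamma2d_set gamma_A eqxx andbT; apply/dominating_in_setT.
move=> D /andP [/dominating_in_setT DD /eqP]; rewrite gamma_A => DA.
by apply/eqP/negPn/negP => /(minA D DD); rewrite DA ltnn.
Qed.
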